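(* Let $(G_n)_{n\in\mathbb{N}}$ be an iteratively constructible family (an $F$-iteration family of $k$-graphs). Then: (1) the families $(G_{\binom{n}{2}})_{n\in\mathbb{N}}$ and $(G_{n^2})_{n\in\mathbb{N}}$ are bi-iteratively constructible (namely an $(id,F,id)$-bi-iteration family and an $(id,F^2,F)$-bi-iteration family, respectively); (2) for every $c\in\mathbb{N}^{+}$ and $d,e\in\mathbb{Z}$ there exists $r\in\mathbb{N}$ such that the family $H_n=G_{c(n+r)^2+d(n+r)+e}$, $n\in\mathbb{N}$, is bi-iteratively constructible.
   Context: A $k$-graph is $G=(V,E;R_1,\dots,R_k)$ where $(V,E)$ is a finite simple graph (its underlying graph) and $R_1,\dots,R_k$ (the labels, possibly empty) partition $V$. Basic operations on $k$-graphs: $Add_i$ adds a new isolated vertex to $R_i$; $\rho_{i\to j}$ moves all vertices of $R_i$ into $R_j$, leaving $R_i$ empty; $\eta_{i,j}$ adds all edges between $R_i$ and $R_j$; for $b\in\mathbb{N}$, $\eta^b_{i,j}$ acts as $\eta_{i,j}$ if $|R_i\cup R_j|\le b$ and otherwise does nothing; $\delta_{i,j}$ removes all edges between $R_i$ and $R_j$. An elementary operation is a finite composition of basic operations; $id$ is the empty composition. A sequence of $k$-graphs is an $F$-iteration family if $G_{n+1}=F(G_n)$ for all $n$ ($G_0$ a $k$-graph, $F$ elementary), and an $(H,F,L)$-bi-iteration family if $G_{n+1}=H(F^n(L(G_n)))$ for all $n$, $F^n$ denoting $n$-fold application. A sequence of graphs is (bi-)iteratively constructible if for some $k$ it is the sequence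 of underlying graphs of an iteration (resp. bi-iteration) family of $k$-graphs. *)

From HB Require Import structures.
From mathcomp Require Import all_boot all_order all_algebra.
Set Implicit Arguments. Unset Strict Implicit. Unset Printing Implicit Defensive.

(* A k-graph: vertices are 0, ..., nv-1; label of vertex u is lab u
   (the label classes R_0,...,R_{k-1} partition the vertex set);
   adj is the adjacency relation of the underlying simple graph.
   Values of lab/adj outside the vertex set are irrelevant junk,
   constrained by kgraph_wf. *)
Record kgraph := KGraph { nv : nat; lab : nat -> nat; adj : nat -> nat -> bool }.

Definition kgraph_wf (k : nat) (G : kgraph) : Prop :=
  [/\ (forall u, u < nv G -> lab G u < k),
      (forall u v, adj G u v = adj G v u),
      (forall u, ~~ adj G u u)
    & (forall u v, adj G u v -> u < nv G)].

Definition inR (G : kgraph) (i u : nat) : bool := (u < nv G) && (lab G u == i).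

Definition between (G : kgraph) (i j u v : nat) : bool :=
  (inR G i u && inR G j v) || (inR G j u && inR G i v).

Definition card_union (G : kgraph) (i j : nat) : nat :=
  count (fun u => inR G i u || inR G j u) (iota 0 (nv G)).

Inductive basic_op :=
  | OAdd of nat
  | ORel of nat & nat
  | OEta of nat & nat
  | OEtaB of nat & nat & nat
  | ODel of nat & nat.

Definition op_add (i : nat) (G : kgraph) : kgraph :=
  KGraph (nv G).+1 (fun u => if u == nv G then i else lab G u) (adj G).

Definition op_rel (i j : nat) (G : kgraph) : kgraph :=
  KGraph (nv G) (fun u => if inR G i u then j else lab G u) (adj G).

Definition op_eta (i j : nat) (G : kgraph) : kgraph :=
  KGraph (nv G) (lab G) (fun u v => adj G u v || ((u != v) && between G i j u v)).

Definition op_etab (b i j : nat) (G : kgraph) : kgraph :=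
  if card_union G i j <= b then op_eta i j G else G.

Definition op_del (i j : nat) (G : kgraph) : kgraph :=
  KGraph (nv G) (lab G) (fun u v => adj G u v && ~~ between G i j u v).

Definition apply_basic (o : basic_op) (G : kgraph) : kgraph :=
  match o with
  | OAdd i => op_add i G
  | ORel i j => op_rel i j G
  | OEta i j => op_eta i j G
  | OEtaB b i j => op_etab b i j G
  | ODel i j => op_del i j G
  end.

Definition basic_valid (k : nat) (o : basic_op) : bool :=
  match o with
  | OAdd i => i < k
  | ORel i j | OEta i j | OEtaB _ i j | ODel i j => (i < k) && (j < k)
  end.

Definition elem_op := seq basic_op.
Definition elem_valid (k : nat) (F : elem_op) : bool := all (basic_valid k) F.
Definition apply_elem (F : elem_op) (G : kgraph) : kgraph := foldl (fun H o => apply_basic o H) G F.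
Definition id_op : elem_op := [::].

Definition iteration_family (k : nat) (F : elem_op) (G : nat -> kgraph) : Prop :=
  [/\ kgraph_wf k (G 0), elem_valid k F & forall n, G n.+1 = apply_elem F (G n)].

Definition bi_iteration_family (k : nat) (H F L : elem_op) (G : nat -> kgraph) : Prop :=
  [/\ kgraph_wf k (G 0), elem_valid k H, elem_valid k F, elem_valid k L &
      forall n, G n.+1 = apply_elem H (iter n (apply_elem F) (apply_elem L (G n)))].

Definition underlying_iso (G1 G2 : kgraph) : Prop :=
  exists f : 'I_(nv G1) -> 'I_(nv G2),
    bijective f /\ forall u v : 'I_(nv G1), adj G1 u v = adj G2 (f u) (f v).

Definition bi_iteratively_constructible (S : nat -> kgraph) : Prop :=
  exists (k : nat) (H F L : elem_op) (G : nat -> kgraph),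
    bi_iteration_family k H F L G /\ forall n, underlying_iso (G n) (S n).

From HB Require Import structures.
From mathcomp Require Import all_boot all_order all_algebra.
From mathcomp Require Import zify ring.
Import GRing.Theory Num.Theory.
Set Implicit Arguments.

(* If (G_n) is an F-iteration family then G_{a+b} = F^a(G_b).
   Hence, for any index sequence with a "linear second difference"
       idx (n+1) = a*n + b + idx n,
   the family G_{idx n} satisfies G_{idx(n+1)} = (F^a)^n (F^b (G_{idx n})),
   i.e. it is an (id, F^a, F^b)-bi-iteration family.  The theorem is the
   instance of this observation for
   - idx n = C(n,2)  (a = 1, b = 0),   idx n = n^2  (a = 2, b = 1),
   - idx n = c(n+r)^2 + d(n+r) + e with r = |d|+|e|+1: this choice of r
     makes the quadratic nonnegative for all n, and its increments are
     n*(2c) + (2cr + c + d), with a nonnegative constant term. *)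

Lemma between_sym G i j u v : between G i j u v = between G i j v u.
Proof. by rewrite /between; case: (inR G i u) (inR G j v) (inR G j u) (inR G i v) => [] [] [] []. Qed.

Lemma between_lt G i j u v : between G i j u v -> u < nv G.
Proof. by rewrite /between /inR; case/orP=> /andP[/andP[]]. Qed.

Lemma wf_eta k i j G : kgraph_wf k G -> kgraph_wf k (op_eta i j G).
Proof.
case=> Hl Hs Hi Hb; split=> //= [u v|u|u v].
- by rewrite Hs between_sym eq_sym.
- by rewrite (negbTE (Hi u)) eqxx.
- by case/orP=> [/Hb//|/andP[_ /between_lt]].
Qed.

Lemma wf_basic k o G : basic_valid k o -> kgraph_wf k G -> kgraph_wf k (apply_basic o G).
Proof.
move=> + hG; have [Hl Hs Hi Hb] := hG; case: o => /=.
- move=> i ik; split=> //= [u hu|u v /Hb]; last by lia.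
  by case: eqP => // hne; apply: Hl; lia.
- by move=> i j /andP[ik jk]; split=> //= u; case: ifP => // _ /Hl.
- by move=> i j _; apply: wf_eta hG.
- by move=> b i j _; rewrite /op_etab; case: ifP => // _; apply: wf_eta hG.
- move=> i j _; split=> //= [u v|u|u v].
  + by rewrite Hs between_sym.
  + by rewrite (negbTE (Hi u)).
  + by case/andP=> /Hb.
Qed.

Lemma wf_elem k F G : elem_valid k F -> kgraph_wf k G -> kgraph_wf k (apply_elem F G).
Proof.
elim: F G => //= o F IH G /andP[ho hF] hG.
by apply: IH => //; apply: wf_basic.
Qed.

Lemma apply_elem_cat F1 F2 G : apply_elem (F1 ++ F2) G = apply_elem F2 (apply_elem F1 G).
Proof. by rewrite /apply_elem foldl_cat. Qed.

(* The m-fold power F^m of an elementary operation, again elementary;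
   fpow F 0, fpow F 1, fpow F 2 are convertible to id_op, F, F ++ F. *)
Fixpoint fpow (F : elem_op) (m : nat) : elem_op :=
  if m is m'.+1 then fpow F m' ++ F else id_op.

Lemma fpowE F m G : apply_elem (fpow F m) G = iter m (apply_elem F) G.
Proof. by elim: m => //= m IH; rewrite apply_elem_cat IH. Qed.

Lemma fpow_valid k F m : elem_valid k F -> elem_valid k (fpow F m).
Proof. by move=> hF; elim: m => //= m IH; rewrite /elem_valid all_cat; apply/andP. Qed.

Section IterationFamily.
Variables (k : nat) (F : elem_op) (G : nat -> kgraph).
Hypothesis iterG : iteration_family k F G.

Lemma iteration_shift a b : G (a + b) = iter a (apply_elem F) (G b).
Proof. by case: iterG => _ _ hs; elim: a => //= a IH; rewrite addSn hs IH. Qed.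

Lemma iteration_wf n : kgraph_wf k (G n).
Proof.
case: iterG => h0 hF _; rewrite -[n]addn0 iteration_shift.
by elim: n => //= n IH; apply: wf_elem.
Qed.

Lemma iter_fpow a n b : iter n (apply_elem (fpow F a)) (G b) = G (n * a + b).
Proof.
elim: n b => //= n IH b.
by rewrite IH fpowE -iteration_shift mulSn addnA.
Qed.

Lemma bi_iteration_of_index (idx : nat -> nat) (a b : nat) :
  (forall n, idx n.+1 = n * a + b + idx n) ->
  bi_iteration_family k id_op (fpow F a) (fpow F b) (fun n => G (idx n)).
Proof.
have hF : elem_valid k F by case: iterG.
move=> incr; split=> //; try exact: iteration_wf; try exact: fpow_valid.
by move=> n; rewrite /= fpowE -iteration_shift iter_fpow incr addnA.
Qed.

End IterationFamily.

Lemma bi_iteration_constructible k H F L S :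
  bi_iteration_family k H F L S -> bi_iteratively_constructible S.
Proof.
move=> hS; exists k, H, F, L, S; split=> // n.
by exists id; split=> //; exists id.
Qed.

Lemma quadratic_nonneg (c : nat) (d e : int) (m : nat) :
  0 < c -> (`|d|%N + `|e|%N + 1 <= m)%N ->
  (0 <= c%:Z * (m%:Z ^+ 2) + d * m%:Z + e)%R.
Proof. by move=> hc hm; nia. Qed.

Lemma quadratic_increment (c : nat) (d e : int) (r n : nat) :
  (c%:Z * ((n.+1 + r)%:Z ^+ 2) + d * (n.+1 + r)%:Z + e =
   (c%:Z * ((n + r)%:Z ^+ 2) + d * (n + r)%:Z + e)
     + (n * (2 * c))%:Z + (2 * c%:Z * r%:Z + c%:Z + d))%R.
Proof. by rewrite !PoszD !PoszM; ring. Qed.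

Lemma shifted_quadratic_family k F G (c : nat) (d e : int) (r : nat) :
  iteration_family k F G -> 0 < c -> (`|d|%N + `|e|%N + 1 <= r)%N ->
  (forall n, (0 <= c%:Z * ((n + r)%:Z ^+ 2) + d * (n + r)%:Z + e)%R) /\
  bi_iteratively_constructible
    (fun n => G `|(c%:Z * ((n + r)%:Z ^+ 2) + d * (n + r)%:Z + e)%R|%N).
Proof.
move=> iterG hc hr.
pose f n := (c%:Z * ((n + r)%:Z ^+ 2) + d * (n + r)%:Z + e)%R.
have f_nonneg n : (0 <= f n)%R by apply: quadratic_nonneg => //; lia.
have slope_nonneg : (0 <= 2 * c%:Z * r%:Z + c%:Z + d)%R by nia.
split=> //; apply: bi_iteration_constructible.
apply: (bi_iteration_of_index iterG (fun n => `|f n|%N) (2 * c)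
          `|(2 * c%:Z * r%:Z + c%:Z + d)%R|%N) => n.
apply/eqP; rewrite -eqz_nat PoszD PoszD !gez0_abs //.
by rewrite /f quadratic_increment -addrA addrC.
Qed.

Theorem mainTheorem13 (k : nat) (F : elem_op) (G : nat -> kgraph) :
  iteration_family k F G ->
  (bi_iteration_family k id_op F id_op (fun n => G 'C(n, 2)) /\
   bi_iteration_family k id_op (F ++ F) F (fun n => G (n ^ 2))) /\
  (forall (c : nat) (d e : int), 0 < c ->
     exists r : nat,
       (forall n : nat,
          (0 <= c%:Z * ((n + r)%:Z ^+ 2) + d * (n + r)%:Z + e)%R) /\
       bi_iteratively_constructible
         (fun n => G `|(c%:Z * ((n + r)%:Z ^+ 2) + d * (n + r)%:Z + e)%R|%N)).
Proof.
move=> iterG; split; first split.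
-
  apply: (bi_iteration_of_index iterG (fun n => 'C(n, 2)) 1 0) => n.
  by rewrite binS bin1 muln1 addn0 addnC.
-
  apply: (bi_iteration_of_index iterG (fun n => n ^ 2) 2 1) => n.
  by rewrite !expnS expn0; lia.
move=> c d e hc; exists (`|d|%N + `|e|%N + 1)%N.
exact: shifted_quadratic_family iterG hc (leqnn _).
Qed.
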